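(* Let $k$ be an algebraically closed field of characteristic $2$, $G=\mathrm{GL}(n,k)$ acting by conjugation on $\mathfrak g=\mathfrak{gl}(n,k)$, and $\mathcal N_1=\{x\in\mathfrak g:x^2=0\}$. Let $i$ be an integer with $n-2i\ge 2$, $i\ge 0$, and let $$e_i=\begin{pmatrix}0&0&I_i\\0&0&0\\0&0&0\end{pmatrix}$$ with diagonal blocks of sizes $i$, $n-2i$, $i$. Every element of the centralizer $\mathfrak z_{\mathfrak g}(e_i)$ has the block form $$x=\begin{pmatrix}A&B&C\\0&E&F\\0&0&A\end{pmatrix},\quad A,C\in\mathrm{Mat}_{i\times i},\ E\in\mathrm{Mat}_{(n-2i)\times(n-2i)},\ B\in\mathrm{Mat}_{i\times(n-2i)},\ F\in\mathrm{Mat}_{(n-2i)\times i}.$$ Let $V$ be an irreducible component of $\mathfrak z_{\mathfrak g}(e_i)\cap\mathcal N_1$, and suppose that some $x\in V$ has $E\neq 0$. Then $V$ is not contained in $\overline{G\cdot e_i}$.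
   Context: $\overline{G\cdot e_i}$ denotes the Zariski closure of the conjugacy class of $e_i$. *)

From HB Require Import structures.
From mathcomp Require Import all_boot all_order all_algebra.
Set Implicit Arguments. Unset Strict Implicit. Unset Printing Implicit Defensive.
Import GRing.Theory.
Local Open Scope ring_scope.

Definition mxset (k : fieldType) (n : nat) := 'M[k]_n -> Prop.

Section Zariski.
Variables (k : fieldType) (n : nat).

Definition msubset (A B : mxset k n) : Prop := forall x, A x -> B x.

Inductive polyfun : ('M[k]_n -> k) -> Prop :=
  | polyfun_cst (c : k) : polyfun (fun _ => c)
  | polyfun_coord (p q : 'I_n) : polyfun (fun x => x p q)
  | polyfun_add f g : polyfun f -> polyfun g -> polyfun (fun x => f x + g x)
  | polyfun_mul f g : polyfun f -> polyfun g -> polyfun (fun x => f x * g x).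

Definition zclosed (Z : mxset k n) : Prop :=
  exists P : ('M[k]_n -> k) -> Prop,
    (forall f, P f -> polyfun f) /\
    (forall x, Z x <-> (forall f, P f -> f x = 0)).

Definition zclosure (S : mxset k n) : mxset k n :=
  fun x => forall Z, zclosed Z -> msubset S Z -> Z x.

Definition zirreducible (Y : mxset k n) : Prop :=
  (exists y, Y y) /\
  forall Z1 Z2, zclosed Z1 -> zclosed Z2 ->
    msubset Y (fun x => Z1 x \/ Z2 x) -> msubset Y Z1 \/ msubset Y Z2.

Definition irr_component (V S : mxset k n) : Prop :=
  zirreducible V /\ msubset V S /\
  forall W, zirreducible W -> msubset V W -> msubset W S -> msubset W V.

Definition conj_orbit (e : 'M[k]_n) : mxset k n :=
  fun x => exists g : 'M[k]_n, g \in unitmx /\ x = g *m e *m invmx g.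

Definition centralizer (e : 'M[k]_n) : mxset k n :=
  fun x => x *m e = e *m x.

Definition nil1 : mxset k n := fun x => x *m x = 0.

End Zariski.

(* e_i : identity block I_i in the top-right corner, blocks of sizes i, n-2i, i
   (0-based: entry (p,q) is 1 iff p < i and q = p + (n - i)). *)
Definition e_mx (k : fieldType) (n i : nat) : 'M[k]_n :=
  \matrix_(p < n, q < n) (((p < i)%N && (nat_of_ord q == p + (n - i))%N :> bool)%:R : k).

(* the middle diagonal block E of x (rows and columns i .. n-i-1) is nonzero *)
Definition midblock_nonzero (k : fieldType) (n i : nat) (x : 'M[k]_n) : Prop :=
  exists p q : 'I_n, [/\ (i <= p)%N, (p < n - i)%N, (i <= q)%N, (q < n - i)%N
                        & x p q != 0].

(* A component V of z(e) ∩ N_1 is stable under x ↦ x + t e: in characteristic 2,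
   (x + t e)^2 = x^2 + 2t xe + t^2 e^2 = 0 for x ∈ z(e) ∩ N_1, and V + k e is still
   irreducible, so maximality forces V + k e = V.  On the other hand every conjugate
   of e_i has rank i, so the (i+1)-minor on the first i rows and row r and the last
   i columns and column c vanishes on the orbit closure.  If x ∈ V has x_rc ≠ 0
   (r, c in the middle block), this minor of x + t e_i is x_rc times a monic
   polynomial of degree i in t, hence nonzero for some t, and x + t e_i ∈ V escapes
   the orbit closure. *)
From HB Require Import structures.
From mathcomp Require Import all_boot all_order all_algebra all_fingroup.
From mathcomp Require Import zify.
From Stdlib Require Import FunctionalExtensionality Classical.
Set Implicit Arguments. Unset Strict Implicit. Unset Printing Implicit Defensive.
Import GRing.Theory.
Local Open Scope ring_scope.

Section PolynomialFunctions.
Variables (k : fieldType) (n : nat).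
Implicit Types (f g : 'M[k]_n -> k) (v w : 'M[k]_n).

Lemma eq_polyfun f g : f =1 g -> polyfun f -> polyfun g.
Proof. by move=> /functional_extensionality ->. Qed.

Lemma polyfun_sum (I : Type) (r : seq I) (P : pred I) (F : I -> 'M[k]_n -> k) :
  (forall j, polyfun (F j)) -> polyfun (fun x => \sum_(j <- r | P j) F j x).
Proof.
move=> polyF; elim: r => [|a r IHr].
  by apply: (@eq_polyfun (fun=> 0)) => [x|]; [rewrite big_nil | constructor].
apply: (@eq_polyfun (fun x => (if P a then F a x else 0) + \sum_(j <- r | P j) F j x)).
  by move=> x; rewrite big_cons; case: (P a); rewrite ?add0r.
by constructor=> //; case: (P a) => //; constructor.
Qed.

Lemma polyfun_prod (I : Type) (r : seq I) (P : pred I) (F : I -> 'M[k]_n -> k) :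
  (forall j, polyfun (F j)) -> polyfun (fun x => \prod_(j <- r | P j) F j x).
Proof.
move=> polyF; elim: r => [|a r IHr].
  by apply: (@eq_polyfun (fun=> 1)) => [x|]; [rewrite big_nil | constructor].
apply: (@eq_polyfun (fun x => (if P a then F a x else 1) * \prod_(j <- r | P j) F j x)).
  by move=> x; rewrite big_cons; case: (P a); rewrite ?mul1r.
by constructor=> //; case: (P a) => //; constructor.
Qed.

Lemma polyfun_det_mxsub m (f g : 'I_m -> 'I_n) :
  polyfun (fun x : 'M[k]_n => \det (mxsub f g x)).
Proof.
apply: (@eq_polyfun (fun x => \sum_(s : 'S_m) (-1) ^+ s * \prod_a x (f a) (g (s a)))).
  move=> x; apply: eq_bigr => s _; congr (_ * _).
  by apply: eq_bigr => a _; rewrite mxE.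
apply: polyfun_sum => s; constructor; first exact: polyfun_cst.
by apply: polyfun_prod => a; apply: polyfun_coord.
Qed.

Lemma polyfun_translate f w : polyfun f -> polyfun (fun v => f (v + w)).
Proof.
elim=> [c|p q|f1 g1 _ IH1 _ IH2|f1 g1 _ IH1 _ IH2]; try by constructor.
apply: (@eq_polyfun (fun v => v p q + w p q)); first by move=> v; rewrite mxE.
by do 2 constructor.
Qed.

Lemma polyfun_line f v w : polyfun f ->
  exists p : {poly k}, forall t, f (v + t *: w) = p.[t].
Proof.
elim=> [c|p q|f1 g1 _ [p1 Ep1] _ [p2 Ep2]|f1 g1 _ [p1 Ep1] _ [p2 Ep2]].
- by exists c%:P => t; rewrite hornerC.
- exists ((v p q)%:P + (w p q)%:P * 'X) => t.
  by rewrite !mxE hornerD hornerM hornerX !hornerC mulrC.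
- by exists (p1 + p2) => t; rewrite hornerD Ep1 Ep2.
- by exists (p1 * p2) => t; rewrite hornerM Ep1 Ep2.
Qed.

End PolynomialFunctions.

Section ZariskiClosed.
Variables (k : fieldType) (n : nat).
Implicit Types (Z : mxset k n) (v w : 'M[k]_n).

Lemma zclosed_translate Z w : zclosed Z -> zclosed (fun v => Z (v + w)).
Proof.
case=> P [polyP ZP].
exists (fun h => exists2 f, P f & h = fun v => f (v + w)); split.
  by move=> _ [f Pf ->]; apply/polyfun_translate/polyP.
move=> x; rewrite ZP; split=> [Zx _ [f Pf ->] | Zx f Pf]; first exact: Zx.
exact: Zx _ (ex_intro2 _ _ f Pf erefl).
Qed.

Lemma zclosed_det_mxsub_eq0 m (f g : 'I_m -> 'I_n) :
  zclosed (fun x : 'M[k]_n => \det (mxsub f g x) = 0).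
Proof.
exists (eq (fun x => \det (mxsub f g x))); split=> [_ <- | x].
  exact: polyfun_det_mxsub.
by split=> [detx0 _ <- // | /(_ _ erefl)].
Qed.

Lemma zclosed_line_root Z v w t0 : zclosed Z -> ~ Z (v + t0 *: w) ->
  exists2 p : {poly k}, p != 0 & forall t, Z (v + t *: w) -> root p t.
Proof.
case=> P [polyP ZP] notZ.
have [f Pf ft0] : exists2 f, P f & f (v + t0 *: w) <> 0.
  apply: NNPP => none; apply/notZ/ZP => f Pf.
  by apply: NNPP => ft0; apply: none; exists f.
have [p Ep] := polyfun_line v w (polyP f Pf).
exists p; first by apply: contra_notN ft0 => /eqP p0; rewrite Ep p0 horner0.
by move=> t /ZP /(_ f Pf) ft; apply/rootP; rewrite -Ep.
Qed.

End ZariskiClosed.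

Definition add_line (k : fieldType) n (V : mxset k n) (w : 'M[k]_n) : mxset k n :=
  fun y => exists v t, V v /\ y = v + t *: w.

Section AddLine.
Variables (k : closedFieldType) (n : nat).
Implicit Types (V S Z : mxset k n) (w : 'M[k]_n).

Lemma add_line_sub V w : msubset V (add_line V w).
Proof. by move=> v Vv; exists v, 0; rewrite scale0r addr0. Qed.

Lemma add_line_subset_or_root V w Z : zclosed Z ->
  msubset (add_line V w) Z \/
  exists v (p : {poly k}), [/\ V v, p != 0 & forall t, Z (v + t *: w) -> root p t].
Proof.
move=> closedZ; have [|notsub] := classic (msubset (add_line V w) Z); first by left.
right; have [v [t0 [Vv notZ]]] : exists v t, V v /\ ~ Z (v + t *: w).
  apply: NNPP => none; apply: notsub => _ [v [t [Vv ->]]].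
  by apply: NNPP => notZ; apply: none; exists v, t.
have [p p0 rootp] := zclosed_line_root closedZ notZ.
by exists v, p.
Qed.

(* If neither Z_j contains V + k w, the t with V + t w ⊆ Z_j are roots of some
   p_j != 0; a t with p_1 p_2 (t) != 0 contradicts the irreducibility of V + t w. *)
Lemma zirreducible_add_line V w : zirreducible V -> zirreducible (add_line V w).
Proof.
case=> [[v0 Vv0] irrV]; split; first by exists v0; apply: add_line_sub.
move=> Z1 Z2 closedZ1 closedZ2 cover.
have [|[v1 [p1 [Vv1 p1n0 root1]]]] := add_line_subset_or_root V w closedZ1.
  by left.
have [|[v2 [p2 [Vv2 p2n0 root2]]]] := add_line_subset_or_root V w closedZ2.
  by right.
have [t] := closed_nonrootP _ (mulf_neq0 p1n0 p2n0).
rewrite rootM negb_or => /andP [notroot1 notroot2].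
have cover_t : msubset V (fun v => Z1 (v + t *: w) \/ Z2 (v + t *: w)).
  by move=> v Vv; apply: cover; exists v, t.
have [] := irrV _ _ (zclosed_translate (t *: w) closedZ1)
  (zclosed_translate (t *: w) closedZ2) cover_t.
  by move=> /(_ v1 Vv1) /root1; rewrite (negbTE notroot1).
by move=> /(_ v2 Vv2) /root2; rewrite (negbTE notroot2).
Qed.

Lemma irr_component_add_line V S w :
  irr_component V S -> msubset (add_line V w) S -> msubset (add_line V w) V.
Proof.
case=> irrV [_ maxV] subS; apply: maxV => //.
  exact: zirreducible_add_line.
exact: add_line_sub.
Qed.

End AddLine.

Lemma centralizer_nil1_add_line (k : fieldType) n (e : 'M[k]_n) V :
  (2 \in [pchar k])%N -> e *m e = 0 ->
  msubset V (fun x => centralizer e x /\ nil1 x) ->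
  msubset (add_line V e) (fun x => centralizer e x /\ nil1 x).
Proof.
move=> char2 ee0 subV _ [x [t [Vx ->]]]; have [ex xx] := subV x Vx.
rewrite /centralizer /nil1 in ex xx *; split.
  by rewrite mulmxDl mulmxDr -scalemxAl -scalemxAr ex.
rewrite mulmxDl !mulmxDr -!scalemxAl -!scalemxAr xx ex ee0 !scaler0 addr0 add0r.
by rewrite -scalerDr -mulr2n -scaler_nat (pcharf0 char2) scale0r scaler0.
Qed.

Section RankBounds.
Variable F : fieldType.

Lemma mxrank_mxsub m n m' n' (f : 'I_m' -> 'I_m) (g : 'I_n' -> 'I_n)
    (A : 'M[F]_(m, n)) :
  (\rank (mxsub f g A) <= \rank A)%N.
Proof.
rewrite mxsubrc (leq_trans (mxrankS (rowsub_sub _ _))) //.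
by rewrite -mxrank_tr trmx_mxsub -[leqRHS]mxrank_tr mxrankS ?rowsub_sub.
Qed.

Lemma det_mxsub_eq0 m n p (f : 'I_p -> 'I_m) (g : 'I_p -> 'I_n) (A : 'M[F]_(m, n)) :
  (\rank A < p)%N -> \det (mxsub f g A) = 0.
Proof.
move=> rankA; apply/eqP; apply: contraTT rankA => det_neq0; rewrite -leqNgt.
have unitS : mxsub f g A \in unitmx by rewrite unitmxE unitfE.
by rewrite -{1}(mxrank_unit unitS) mxrank_mxsub.
Qed.

Lemma mxrank_zero_rows m n r (A : 'M[F]_(m, n)) : (r <= m)%N ->
  (forall (p : 'I_m) (q : 'I_n), (r <= p)%N -> A p q = 0) -> (\rank A <= r)%N.
Proof.
move=> le_rm A0; have -> : A = pid_mx r *m A.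
  apply/matrixP => p q; rewrite mxE (bigD1 p) //= big1 => [|j ne_jp].
    rewrite !mxE eqxx addr0 /=; case: ltnP => [|le_rp]; first by rewrite mul1r.
    by rewrite A0 // mul0r.
  by rewrite mxE val_eqE eq_sym (negbTE ne_jp) mul0r.
by rewrite (leq_trans (mxrankM_maxl _ _)) // rank_pid_mx.
Qed.

Lemma conj_orbit_rank n (e : 'M[F]_n) :
  msubset (conj_orbit e) (fun x => (\rank x <= \rank e)%N).
Proof.
move=> _ [g [_ ->]].
by rewrite (leq_trans (mxrankM_maxl _ _)) // mxrankM_maxr.
Qed.

End RankBounds.

Lemma horner_char_poly (F : fieldType) m (K : 'M[F]_m) a :
  (char_poly K).[a] = \det (a%:M - K).
Proof.
rewrite -[LHS]/(horner_eval a _) -det_map_mx; congr (\det _).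
apply/matrixP => p q.
by rewrite !mxE rmorphB /= rmorphMn /= !horner_evalE hornerX hornerC.
Qed.

Lemma det_block_mx_schur (F : fieldType) m p (A : 'M[F]_m) B C (D : 'M[F]_p) :
  D \in unitmx -> \det (block_mx A B C D) = \det (A - B *m invmx D *m C) * \det D.
Proof.
move=> unitD.
have triangularize : block_mx A B C D *m block_mx 1%:M 0 (- (invmx D *m C)) 1%:M
    = block_mx (A - B *m invmx D *m C) B 0 D.
  rewrite mulmx_block !mulmx1 !mulmx0 !add0r !mulmxN !mulmxA mulmxV //.
  by rewrite mul1mx subrr.
move: (congr1 determinant triangularize).
by rewrite det_mulmx det_lblock det_ublock !det1 !mulr1.
Qed.

Lemma exists_det_block_shift_neq0 (k : closedFieldType) m p (A : 'M[k]_m) B C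
    (D : 'M[k]_p) :
  D \in unitmx -> exists t, \det (block_mx (A + t%:M) B C D) != 0.
Proof.
move=> unitD; set K := B *m invmx D *m C - A.
have [t notroot] := closed_nonrootP _ (monic_neq0 (char_poly_monic K)).
exists t; rewrite det_block_mx_schur // mulf_neq0 //; last by rewrite -unitfE -unitmxE.
by move: notroot; rewrite /root horner_char_poly /K opprB addrCA addrA.
Qed.

Section EMatrix.
Variables (k : fieldType) (n i : nat).
Local Notation e := (e_mx k n i).

Lemma e_mx_sqr : (i <= n - i)%N -> e *m e = 0.
Proof.
move=> le_i_ni; apply/matrixP => p q; rewrite !mxE big1 // => j _; rewrite !mxE.
have [lt_ji|_] := ltnP j i; last by rewrite mulr0.
suff -> : (nat_of_ord j == p + (n - i))%N = false by rewrite andbF mul0r.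
by apply: contraTF lt_ji => /eqP ->; rewrite -leqNgt (leq_trans le_i_ni) ?leq_addl.
Qed.

Lemma mxrank_e_mx : (i <= n)%N -> (\rank e <= i)%N.
Proof.
move=> le_in; apply: mxrank_zero_rows => // p q le_ip.
by rewrite mxE ltnNge le_ip.
Qed.

End EMatrix.

Section EMinor.
Variables (k : fieldType) (n i : nat) (r c : 'I_n).
Hypotheses (le_ir : (i <= r)%N) (lt_c : (c < n - i)%N).
Local Notation e := (e_mx k n i).

Fact lt_in : (i < n)%N.
Proof. by rewrite -subn_gt0 (leq_ltn_trans (leq0n c) lt_c). Qed.

Fact lt_top_row (j : 'I_i) : (j < n)%N.
Proof. exact: ltn_trans (ltn_ord j) lt_in. Qed.

Fact lt_right_col (j : 'I_i) : (n - i + j < n)%N.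
Proof. by rewrite -ltn_subRL subKn // ltnW // lt_in. Qed.

(* The (i+1)-minor of rows {0..i-1, r} and columns {n-i..n-1, c}. *)
Definition minor_row (a : 'I_(i + 1)) : 'I_n :=
  if split a is inl j then Ordinal (lt_top_row j) else r.
Definition minor_col (b : 'I_(i + 1)) : 'I_n :=
  if split b is inl j then Ordinal (lt_right_col j) else c.

Let split_lshift (j : 'I_i) : split (lshift 1 j) = inl j := unsplitK (inl j).
Let split_rshift (j : 'I_1) : split (rshift i j) = inr j := unsplitK (inr j).

Lemma mxsub_e_mx : mxsub minor_row minor_col e = block_mx 1%:M 0 0 0.
Proof.
have c_ne (j : 'I_i) : (nat_of_ord c == j + (n - i))%N = false by lia.
rewrite -[LHS]submxK; congr block_mx; apply/matrixP => a b;
  rewrite !mxE /minor_row /minor_col ?split_lshift ?split_rshift /= ?c_ne ?andbF //.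
- by rewrite ltn_ord addnC eqn_add2r eq_sym.
- by rewrite ltnNge le_ir.
- by rewrite ltnNge le_ir.
Qed.

Lemma drsubmx_mxsub_minor (x : 'M[k]_n) :
  drsubmx (mxsub minor_row minor_col x) = (x r c)%:M.
Proof.
by apply/matrixP => a b; rewrite !ord1 !mxE /minor_row /minor_col !split_rshift.
Qed.

End EMinor.

Lemma exists_det_minor_e_mx_neq0 (k : closedFieldType) n i (r c : 'I_n)
    (le_ir : (i <= r)%N) (lt_c : (c < n - i)%N) (x : 'M[k]_n) :
  x r c != 0 -> exists t,
    \det (mxsub (minor_row r lt_c) (minor_col lt_c) (x + t *: e_mx k n i)) != 0.
Proof.
move=> xrc_neq0; pose S := mxsub (minor_row r lt_c) (minor_col lt_c) x.
have unit_corner : drsubmx S \in unitmx.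
  by rewrite drsubmx_mxsub_minor unitmxE det_scalar1 unitfE.
have [t det_neq0] := exists_det_block_shift_neq0 (ulsubmx S) (ursubmx S) (dlsubmx S) unit_corner.
exists t; rewrite linearD linearZ /= (mxsub_e_mx k le_ir).
change (\det (S + t *: block_mx 1%:M 0 0 0) != 0); rewrite -{1}(submxK S).
by rewrite scale_block_mx add_block_mx !scaler0 !addr0 scalemx1.
Qed.

Theorem mainTheorem5 (k : closedFieldType) (n i : nat)
  (chark : (2 \in [pchar k])%N) (hni : (2 <= n - 2 * i)%N)
  (V : mxset k n)
  (hV : irr_component V (fun x => centralizer (e_mx k n i) x /\ nil1 x))
  (hE : exists x, V x /\ midblock_nonzero i x) :
  ~ msubset V (zclosure (conj_orbit (e_mx k n i))).
Proof.
have [x [Vx [r [c [le_ir _ _ lt_c xrc_neq0]]]]] := hE.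
have le_i_ni : (i <= n - i)%N by lia.
have V_stable : msubset (add_line V (e_mx k n i)) V.
  apply: (irr_component_add_line hV).
  exact (centralizer_nil1_add_line chark (e_mx_sqr k le_i_ni) (proj1 (proj2 hV))).
have [t /eqP det_neq0] := exists_det_minor_e_mx_neq0 le_ir lt_c xrc_neq0.
have V_xt : V (x + t *: e_mx k n i) by apply: V_stable; exists x, t.
move=> V_in_closure; apply: det_neq0.
apply: (V_in_closure _ V_xt
  (fun y => \det (mxsub (minor_row r lt_c) (minor_col lt_c) y) = 0)).
  exact: zclosed_det_mxsub_eq0.
move=> y /conj_orbit_rank rank_y; apply: det_mxsub_eq0.
by rewrite addn1 ltnS (leq_trans rank_y) // mxrank_e_mx //; lia.
Qed.
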